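(* If $f:\mathbb R^n\to\overline{\mathbb R}$ is a-strongly convex, then $f$ is essentially strictly convex.
   Context: Standing assumption: $\phi:\mathbb R^n\to\mathbb R$ is convex, finite-valued, differentiable and strictly convex (Legendre with full domain), super-coercive; $\phi^*$ has the same properties and $\nabla\phi^*=(\nabla\phi)^{-1}$. $\partial f$ is the limiting subdifferential. A proper lsc $f$ is a-strongly convex if for every $(\bar x,\bar v)\in\operatorname{graph}\partial f$: $f(x)\ge f(\bar x)+\phi(x-\bar x+\nabla\phi^*(\bar v))-\phi(\nabla\phi^*(\bar v))$ for all $x$. A proper lsc convex $f$ is essentially strictly convex if it is strictly convex on every convex subset of $\operatorname{dom}\partial f$. *)

(* R : realType, R^n = 'rV[R]_n (sup-norm topology). *)
From HB Require Import structures.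
From mathcomp Require Import all_boot all_order all_algebra.
From mathcomp Require Import all_classical all_reals all_analysis.
Set Implicit Arguments. Unset Strict Implicit. Unset Printing Implicit Defensive.
Import Order.TTheory GRing.Theory Num.Theory.
Import numFieldNormedType.Exports.
Local Open Scope classical_set_scope.
Local Open Scope ring_scope.

Section Defs.
Variables (R : realType) (n : nat).
Notation V := 'rV[R]_n.

Definition dotp (u v : V) : R := \sum_(i < n) u ord0 i * v ord0 i.

Definition grad (g : V -> R) (x : V) : V :=
  \row_(i < n) derive g x (delta_mx ord0 i : V).

Definition fconj (g : V -> R) (y : V) : R :=
  sup [set dotp x y - g x | x in [set: V]].

Definition convex_fun (g : V -> R) : Prop :=
  forall x y (t : R), 0 <= t <= 1 -> g (t *: x + (1 - t) *: y) <= t * g x + (1 - t) * g y.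

Definition strictly_convex_fun (g : V -> R) : Prop :=
  forall x y (t : R), x != y -> 0 < t < 1 ->
    g (t *: x + (1 - t) *: y) < t * g x + (1 - t) * g y.

Definition supercoercive (g : V -> R) : Prop :=
  forall M : R, exists r : R, forall x : V, r < `|x| -> M <= g x / `|x| .

(* phi is a Legendre function with full domain, super-coercive (and so is its conjugate) *)
Definition standing_phi (phi : V -> R) : Prop :=
  [/\ [/\ convex_fun phi, (forall x, differentiable phi x), strictly_convex_fun phi
      & supercoercive phi],
      [/\ (forall y, has_sup [set dotp x y - phi x | x in [set: V]]),
          convex_fun (fconj phi), (forall y, differentiable (fconj phi) y),
          strictly_convex_fun (fconj phi) & supercoercive (fconj phi)] &
      (forall x, grad (fconj phi) (grad phi x) = x) /\
      (forall y, grad phi (grad (fconj phi) y) = y)].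

Local Open Scope ereal_scope.

Definition proper_fun (f : V -> \bar R) : Prop :=
  (forall x, f x != -oo) /\ exists x, f x < +oo.

Definition convex_efun (f : V -> \bar R) : Prop :=
  forall (x y : V) (t : R), (0 <= t <= 1)%R ->
    f (t *: x + (1 - t) *: y)%R <= t%:E * f x + (1 - t)%:E * f y.

Definition frechet_subgrad (f : V -> \bar R) (x v : V) : Prop :=
  f x \is a fin_num /\
  forall eps : R, (0 < eps)%R -> exists2 delta : R, (0 < delta)%R &
    forall y : V, (`|y - x| < delta)%R ->
      f x + (dotp v (y - x) - eps * `|y - x|)%:E <= f y.

Definition limiting_subgrad (f : V -> \bar R) (x v : V) : Prop :=
  f x \is a fin_num /\ exists (xk vk : nat -> V),
    [/\ xk @ \oo --> x, (fun k => f (xk k)) @ \oo --> f x,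
        vk @ \oo --> v & forall k, frechet_subgrad f (xk k) (vk k)].

Definition dom_subgrad (f : V -> \bar R) : set V :=
  [set x | exists v, limiting_subgrad f x v].

Definition convex_setV (C : set V) : Prop :=
  forall (x y : V) (t : R), C x -> C y -> (0 <= t <= 1)%R -> C (t *: x + (1 - t) *: y)%R.

Definition a_strongly_convex (phi : V -> R) (f : V -> \bar R) : Prop :=
  proper_fun f /\ lower_semicontinuous f /\
  forall xb vb, limiting_subgrad f xb vb ->
    forall x, f xb + (phi (x - xb + grad (fconj phi) vb)%R
                      - phi (grad (fconj phi) vb))%:E <= f x.

Definition strictly_convex_on (f : V -> \bar R) (C : set V) : Prop :=
  forall (x y : V) (t : R), C x -> C y -> x != y -> (0 < t < 1)%R ->
    f (t *: x + (1 - t) *: y)%R < t%:E * f x + (1 - t)%:E * f y.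

Definition essentially_strictly_convex (f : V -> \bar R) : Prop :=
  [/\ proper_fun f, lower_semicontinuous f, convex_efun f &
      forall C, convex_setV C -> C `<=` dom_subgrad f -> strictly_convex_on f C].

End Defs.

From HB Require Import structures.
From mathcomp Require Import all_boot all_order all_algebra.
From mathcomp Require Import all_classical all_reals all_analysis.
From mathcomp Require Import ring lra.
Set Implicit Arguments. Unset Strict Implicit. Unset Printing Implicit Defensive.
Import Order.TTheory GRing.Theory Num.Def Num.Theory.
Import numFieldNormedType.Exports.
Local Open Scope classical_set_scope.
Local Open Scope ring_scope.

(* For a limiting subgradient (w, v) of f, a-strong convexity says that f lies
   above x |-> f w + phi (x - w + c) - phi c, where c = grad phi^* v; this
   minorant touches f at w and has gradient grad phi c = v there. Averaging it
   at x and y bounds t f x + (1 - t) f y from below by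
   f w + t phi (x - w + c) + (1 - t) phi (y - w + c) - phi c.
   When z = t x + (1 - t) y lies in dom (df), taking w = z and using the strict
   convexity of phi shows that this bound exceeds f z. For convexity of f,
   assume f z > M > t f x + (1 - t) f y: minimising f + K |. - z|^2 over a
   large ball gives a Frechet subgradient (w, v) with f w + <v, z - w> > M,
   while by convexity of phi the bound above is at least
   f w + phi (z - w + c) - phi c >= f w + <v, z - w>. *)

Section row_vectors.
Variables (R : realType) (n : nat).
Implicit Types u v w : 'rV[R]_n.

Lemma dotpC u v : dotp u v = dotp v u.
Proof. by apply: eq_bigr => i _; rewrite mulrC. Qed.

Lemma dotpDl u v w : dotp (u + v) w = dotp u w + dotp v w.
Proof. by rewrite /dotp -big_split; apply: eq_bigr => i _; rewrite mxE mulrDl. Qed.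

Lemma dotpZl (a : R) u v : dotp (a *: u) v = a * dotp u v.
Proof. by rewrite /dotp mulr_sumr; apply: eq_bigr => i _; rewrite mxE mulrA. Qed.

Lemma dotpNl u v : dotp (- u) v = - dotp u v.
Proof. by rewrite -scaleN1r dotpZl mulN1r. Qed.

Lemma dotpDr u v w : dotp u (v + w) = dotp u v + dotp u w.
Proof. by rewrite dotpC dotpDl !(dotpC u). Qed.

Lemma dotp_sqrD u v : dotp (u + v) (u + v) = dotp u u + 2 * dotp u v + dotp v v.
Proof. by rewrite dotpDl !dotpDr (dotpC v u); ring. Qed.

Lemma dotp_ge0 u : 0 <= dotp u u.
Proof. by apply: sumr_ge0 => i _; rewrite -expr2 sqr_ge0. Qed.

Lemma dotp_le_norm u : dotp u u <= n%:R * `|u| ^+ 2.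
Proof.
rewrite -[n in n%:R]card_ord mulr_natl -sumr_const; apply: ler_sum => i _.
rewrite -expr2 -real_normK ?num_real // lerXn2r ?nnegrE //.
by rewrite [`|u|]/normr /= mx_normrE (le_bigmax _ _ (ord0, i)).
Qed.

Lemma norm_le_dotp u : `|u| ^+ 2 <= dotp u u.
Proof.
rewrite -(sqr_sqrtr (dotp_ge0 u)) lerXn2r ?nnegrE ?sqrtr_ge0 //.
rewrite [`|u|]/normr /= mx_normrE.
apply: bigmax_le => [|[i j] _]; first exact: sqrtr_ge0.
rewrite (ord1 i) /= -(sqrtr_sqr (u ord0 j)) ler_sqrt ?dotp_ge0 //.
rewrite /dotp (bigD1 j) //= -expr2 lerDl.
by apply: sumr_ge0 => k _; rewrite -expr2 sqr_ge0.
Qed.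

Lemma continuous_dotp_sqr z : continuous (fun y : 'rV[R]_n => dotp (y - z) (y - z)).
Proof.
apply: (@continuous_big _ _ +%R 0 xpredT) => [|i _]; first exact: add_continuous.
have ci : continuous (fun y : 'rV[R]_n => (y - z) ord0 i).
  have -> : (fun y : 'rV[R]_n => (y - z) ord0 i) = fun y => y ord0 i - z ord0 i.
    by apply/funext => y; rewrite !mxE.
  by move=> y; exact: (cvgB (@coord_continuous _ 1 n ord0 i y) (cvg_cst (z ord0 i))).
by move=> y; exact: (cvgM (ci y) (ci y)).
Qed.

Lemma compact_closed_ball z (r : R) : 0 < r ->
  compact [set y : 'rV[R]_n | `|z - y| <= r].
Proof.
move=> r0; have -> : [set y | `|z - y| <= r] = closed_ball z r by rewrite closed_ballE.
apply: bounded_closed_compact; last exact: closed_ball_closed.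
exists (`|z| + r); split; first by rewrite num_real.
move=> M /ltW zrM y; rewrite closed_ballE //= => zy.
rewrite (le_trans _ zrM) // -{1}(subKr z y) (le_trans (ler_normB _ _)) //.
by rewrite lerD2l.
Qed.

End row_vectors.

Section lower_semicontinuity.
Variable R : realType.
Local Open Scope ereal_scope.

Lemma lte_exists_EFin (x y : \bar R) : x < y -> exists a : R, x < a%:E < y.
Proof.
case: x => [r| |]; case: y => [s| |] //=.
- rewrite lte_fin => rs; exists ((r + s) / 2)%R; rewrite !lte_fin.
  by apply/andP; split; lra.
- by move=> _; exists (r + 1)%R; rewrite lte_fin ltrDl ltr01 ltey.
- by move=> _; exists (s - 1)%R; rewrite lte_fin gtrDl ltrN10 ltNye.
- by move=> _; exists 0%R; rewrite ltey ltNye.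
Qed.

Lemma lower_semicontinuous_compact_min (T : topologicalType) (g : T -> \bar R)
    (A : set T) :
  compact A -> A !=set0 -> lower_semicontinuous g ->
  exists2 c, A c & forall t, A t -> g c <= g t.
Proof.
move=> cA [x0 Ax0] lg; set m := ereal_inf (g @` A).
have mlb t : A t -> m <= g t by move=> At; apply: ereal_inf_lbound; exists t.
have [mE|] := eqVneq m +oo.
  by exists x0 => // t At; have := mlb t At; rewrite mE leye_eq => /eqP ->; exact: leey.
rewrite -ltey => /lte_exists_EFin[a0 /andP[ma0 _]].
(* compactness is applied to the filter of strict sublevel sets above the infimum *)
pose F := filter_from [set a : R | m < a%:E] (fun a => [set x | A x /\ g x < a%:E]).
have FF : ProperFilter F.
  apply: filter_from_proper; last first.
    by move=> a /ereal_inf_lt[_ [y Ay <-] gya]; exists y.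
  apply: filter_from_filter; first by exists a0.
  move=> a b ma mb; exists (Order.min a b); first by rewrite /= EFin_min lt_min ma mb.
  by move=> x [Ax]; rewrite EFin_min lt_min => /andP[].
have FA : F A by exists a0 => // x [].
have [c [Ac clc]] := cA F FF FA.
exists c => // t At; apply: le_trans (mlb t At).
rewrite leNgt; apply/negP => /lte_exists_EFin[a /andP[ma agc]].
have [U nU Ug] := lg c a agc.
have [y [[_ gya] Uy]] := clc _ _ (ex_intro2 _ _ a ma (fun x h => h)) nU.
by have := Ug y Uy; rewrite ltNge (ltW gya).
Qed.

Lemma lower_semicontinuousD_continuous (T : topologicalType) (g : T -> \bar R)
    (h : T -> R) :
  lower_semicontinuous g -> continuous h ->
  lower_semicontinuous (fun x => g x + (h x)%:E).
Proof.
move=> lg ch x a /=; rewrite -lteBlDr // -EFinB => /lte_exists_EFin[b /andP[ab bg]].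
rewrite lte_fin in ab.
have [U nU Ug] := lg x b bg.
have /cvgrPdist_lt /(_ (b - (a - h x))%R) : h y @[y --> x] --> h x by exact: ch.
rewrite subr_gt0 => /(_ ab) nh.
exists (U `&` [set y | `|h x - h y| < b - (a - h x)]%R); first exact: filterI.
move=> y [/Ug gyb]; rewrite /= ltr_norml => /andP[_ hy].
apply: lt_le_trans (leeD2r _ (ltW gyb)); rewrite -EFinD lte_fin; lra.
Qed.

End lower_semicontinuity.

Section gradient.
Variables (R : realType) (n : nat) (phi : 'rV[R]_n -> R).

Lemma dotp_grad (c u : 'rV[R]_n) : differentiable phi c ->
  dotp (grad phi c) u = 'D_u phi c.
Proof.
move=> dphi; rewrite deriveE // {2}(row_sum_delta u) linear_sum.
by apply: eq_bigr => i _; rewrite linearZ /= mxE deriveE // mulrC.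
Qed.

Lemma convex_derive_le (c u : 'rV[R]_n) : convex_fun phi -> derivable phi c u ->
  'D_u phi c <= phi (c + u) - phi c.
Proof.
move=> cphi dphi.
have dq : (fun h => h^-1 *: ((phi \o shift c) (h *: u) - phi c)) @ 0^'+ --> 'D_u phi c.
  have right_dnbhs : (0:R)^'+ --> (0:R)^'.
    move=> P; rewrite !nbhs_simpl /dnbhs /at_right /within /=.
    by apply: filterS => x Px x0; apply: Px; exact: lt0r_neq0.
  exact: cvg_trans (cvg_app _ right_dnbhs) dphi.
apply: (cvgr_to_le dq); near=> h.
have h0 : 0 < h by near: h; exact: nbhs_right_gt.
have h1 : h < 1 by near: h; exact: nbhs_right_lt.
rewrite /= /shift -[_ *: _]/(_ * _) mulrC ler_pdivrMr //.
have := cphi (c + u) c h; rewrite (ltW h0) (ltW h1) => /(_ isT).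
have -> : h *: (c + u) + (1 - h) *: c = h *: u + c.
  by apply/rowP => i; rewrite !mxE; ring.
by rewrite addrC; lra.
Unshelve. all: by end_near.
Qed.

Lemma convex_grad_le (c u : 'rV[R]_n) : convex_fun phi -> differentiable phi c ->
  dotp (grad phi c) u <= phi (c + u) - phi c.
Proof.
by move=> cphi dphi; rewrite dotp_grad //; apply: convex_derive_le => //; exact: diff_derivable.
Qed.

End gradient.

Section frechet_subgradient.
Variables (R : realType) (n : nat).
Notation V := 'rV[R]_n.
Implicit Types f : V -> \bar R.

Lemma frechet_subgrad_prox f (z w : V) (K e : R) : 0 <= K -> 0 < e ->
  f w \is a fin_num ->
  (forall y, `|y - w| < e ->
     (f w + (K * dotp (w - z) (w - z))%:E <= f y + (K * dotp (y - z) (y - z))%:E)%E) ->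
  frechet_subgrad f w ((2 * K) *: (z - w)).
Proof.
move=> K0 e0 fw wmin; split => // eps eps0.
have Kn0 : 0 < K * n%:R + 1 by have := mulr_ge0 K0 (ler0n _ n); lra.
exists (Order.min e (eps / (K * n%:R + 1))); first by rewrite lt_min e0 divr_gt0.
move=> y; rewrite lt_min => /andP[/wmin + ]; rewrite -(fineK fw) ltr_pdivlMr //.
set a := y - w; set W := fine (f w) => + aeps.
have qy : K * dotp (y - z) (y - z) =
    K * dotp (w - z) (w - z) + K * dotp a a - dotp ((2 * K) *: (z - w)) a.
  rewrite (_ : y - z = a + (w - z)); last by rewrite /a addrA subrK.
  by rewrite dotp_sqrD -[z - w]opprB scalerN dotpNl dotpZl (dotpC a); ring.
have qa : K * dotp a a <= eps * `|a|.
  have := ler_wpM2l K0 (dotp_le_norm a); have := normr_ge0 a; nra.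
case: (f y) => [Y| |]; rewrite ?leey // -?EFinD ?lee_fin ?addNye ?leeNy_eq //.
by rewrite qy; lra.
Qed.

Lemma exists_frechet_subgrad_above f (z : V) (M : R) :
  proper_fun f -> lower_semicontinuous f -> (M%:E < f z)%E ->
  exists w v, frechet_subgrad f w v /\ (M%:E < f w + (dotp v (z - w))%:E)%E.
Proof.
move=> [fNy [x0 fx0]] lf Mz.
have [X0 fx0E] : exists X0 : R, f x0 = X0%:E.
  by move: fx0 (fNy x0); case: (f x0) => [r| |] // _ _; exists r.
have [del del0 fM] : exists2 del : R, 0 < del &
    forall y, `|z - y| < del -> (M%:E < f y)%E.
  have [U /nbhs_ballP[del /= del0 dU] Uf] := lf z M Mz.
  by exists del => // y zy; apply/Uf/dU; rewrite -ball_normE.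
set d := `|z - x0|; set rho := (n%:R + 1) * (d + 1).
have [n0 d0] : 0 <= n%:R :> R /\ 0 <= d by split; rewrite ?ler0n ?normr_ge0.
have rho0 : 0 < rho by rewrite mulr_gt0 //; lra.
have rho_big : n%:R * d ^+ 2 + 1 <= rho ^+ 2.
  have : 1 <= (n%:R + 1) * (n%:R + 1) :> R by nra.
  have : 0 <= (d + 1) ^+ 2 by exact: sqr_ge0.
  rewrite /rho exprMn; nra.
set B := [set y : V | `|z - y| <= rho].
have Bx0 : B x0 by rewrite /B /= -/d /rho; nra.
have cB : compact B := @compact_closed_ball R n z rho rho0.
have [m fm] : exists m : R, forall y, B y -> (m%:E <= f y)%E.
  have [w0 _ w0min] := lower_semicontinuous_compact_min cB (ex_intro _ x0 Bx0) lf.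
  move: w0min (fNy w0) (w0min x0 Bx0); rewrite fx0E.
  by case: (f w0) => [r| |] w0min // _ _; exists r.
(* K is large enough for the minimiser w of f + K |. - z|^2 on B to lie inside B
   (since K > f x0 - m) and to satisfy f w + 2 K |z - w|^2 > M *)
set K := 1 + `|X0 - m| + `|M - m| / del ^+ 2.
have del2 : 0 < del ^+ 2 by rewrite exprn_gt0.
have [K0 KX KM] : [/\ 0 < K, X0 - m < K & M - m <= K * del ^+ 2].
  have := ler_norm (X0 - m); have := ler_norm (M - m).
  have := normr_ge0 (X0 - m); have := divr_ge0 (normr_ge0 (M - m)) (ltW del2).
  rewrite /K mulrDl divfK ?gt_eqF //; split; nra.
pose q y := K * dotp (y - z) (y - z).
have cq : continuous q.
  by move=> y; have := cvgM (cvg_cst K) (@continuous_dotp_sqr R n z y); exact.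
have [w Bw wmin] := lower_semicontinuous_compact_min cB (ex_intro _ x0 Bx0)
  (lower_semicontinuousD_continuous lf cq).
have [W fwE Wx0] : exists2 W, f w = W%:E & W + q w <= X0 + q x0.
  move: (fNy w) (wmin x0 Bx0); rewrite fx0E /=.
  by case: (f w) => [r| |] // _; rewrite -EFinD lee_fin; exists r.
have mW : m <= W by rewrite -lee_fin -fwE; exact: fm.
have qx0 : q x0 <= K * (n%:R * d ^+ 2).
  by rewrite ler_wpM2l ?(ltW K0) // /d distrC dotp_le_norm.
have w_int : `|z - w| < rho.
  rewrite ltNge; apply/negP => rw.
  have : K * rho ^+ 2 <= q w.
    rewrite ler_wpM2l ?(ltW K0) // (le_trans _ (norm_le_dotp _)) //.
    by rewrite distrC lerXn2r ?nnegrE ?(ltW rho0).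
  nra.
exists w, ((2 * K) *: (z - w)); split.
  apply: (frechet_subgrad_prox (e := rho - `|z - w|)); rewrite ?fwE //.
  - exact: ltW.
  - by rewrite subr_gt0.
  move=> y yw; rewrite -fwE; apply: wmin.
  by rewrite /B /= (le_trans (ler_distD w z y)) // (distrC w y); lra.
rewrite fwE -EFinD lte_fin -[z - w]opprB dotpZl dotpNl dotpC dotpNl opprK -mulrA.
rewrite -/(q w); have qw0 : 0 <= q w by rewrite mulr_ge0 ?(ltW K0) ?dotp_ge0.
have [zw|zw] := ltP `|z - w| del.
  by have := fM w zw; rewrite fwE lte_fin; lra.
have : K * del ^+ 2 <= q w.
  rewrite ler_wpM2l ?(ltW K0) // (le_trans _ (norm_le_dotp _)) //.
  by rewrite distrC lerXn2r ?nnegrE ?(ltW del0).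
nra.
Qed.

Lemma frechet_subgrad_limiting f (x v : V) :
  frechet_subgrad f x v -> limiting_subgrad f x v.
Proof.
move=> fv; split; first by case: fv.
by exists (fun=> x), (fun=> v); split => //; exact: cvg_cst.
Qed.

End frechet_subgradient.

Section a_strong_convexity.
Variables (R : realType) (n : nat) (phi : 'rV[R]_n -> R).
Notation V := 'rV[R]_n.
Implicit Types f : V -> \bar R.

Lemma convex_comb_shift (x y w c : V) (t : R) :
  t *: (x - w + c) + (1 - t) *: (y - w + c) = (t *: x + (1 - t) *: y) - w + c.
Proof. by apply/rowP => i; rewrite !mxE; ring. Qed.

Lemma minorant_convex_comb f (w c : V) : f w \is a fin_num ->
  (forall x, f w + (phi (x - w + c) - phi c)%:E <= f x)%E ->
  forall x y (t : R), 0 <= t <= 1 ->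
  ((fine (f w) + (t * phi (x - w + c) + (1 - t) * phi (y - w + c) - phi c))%:E
     <= t%:E * f x + (1 - t)%:E * f y)%E.
Proof.
move=> fw minor x y t /andP[t0 t1]; set W := fine (f w).
have := minor y; have := minor x; rewrite -(fineK fw) -/W -!EFinD => mx my.
have t1' : (0 <= (1 - t)%:E)%E by rewrite lee_fin subr_ge0.
apply: le_trans (leeD (lee_wpmul2l _ mx) (lee_wpmul2l t1' my)); rewrite ?lee_fin //.
by lra.
Qed.

Lemma a_strongly_convex_convex f : convex_fun phi -> (forall x, differentiable phi x) ->
  (forall v, grad phi (grad (fconj phi) v) = v) ->
  a_strongly_convex phi f -> convex_efun f.
Proof.
move=> cphi dphi gradK [pf [lf minor]] x y t t01.
set z := t *: x + (1 - t) *: y.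
rewrite leNgt; apply/negP => /lte_exists_EFin[M /andP[combM Mz]].
have [w [v [fv Mw]]] := exists_frechet_subgrad_above pf lf Mz.
have fw : f w \is a fin_num by case: fv.
set W := fine (f w); set c := grad (fconj phi) v.
have comb := minorant_convex_comb fw (minor w v (frechet_subgrad_limiting fv)) x y t01.
have := cphi (x - w + c) (y - w + c) t t01; rewrite convex_comb_shift -/z.
have := convex_grad_le (z - w) cphi (dphi c); rewrite gradK (addrC c).
have := le_lt_trans comb combM; rewrite lte_fin -/c.
by move: Mw; rewrite -(fineK fw) -/W -EFinD lte_fin /=; lra.
Qed.

Lemma a_strongly_convex_strict f : strictly_convex_fun phi ->
  a_strongly_convex phi f -> forall C, convex_setV C -> C `<=` dom_subgrad f ->
  strictly_convex_on f C.
Proof.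
move=> scphi [_ [_ minor]] C cC Cf x y t Cx Cy xy /andP[t0 t1].
have t01 : 0 <= t <= 1 by rewrite !ltW.
set z := t *: x + (1 - t) *: y.
have [v lv] := Cf z (cC x y t Cx Cy t01).
have fz : f z \is a fin_num by case: lv.
set c := grad (fconj phi) v.
apply: lt_le_trans (minorant_convex_comb fz (minor z v lv) x y t01).
have := scphi (x - z + c) (y - z + c) t; rewrite convex_comb_shift subrr add0r.
rewrite t0 t1 => /(_ _ isT); rewrite -(fineK fz) lte_fin -/c.
have -> : x - z + c != y - z + c by apply: contra xy => /eqP/addIr/addIr ->.
move=> /(_ isT); lra.
Qed.

End a_strong_convexity.

Theorem mainTheorem10 (R : realType) (n : nat) (phi : 'rV[R]_n -> R)
  (f : 'rV[R]_n -> \bar R) :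
  standing_phi phi -> a_strongly_convex phi f -> essentially_strictly_convex f.
Proof.
move=> [[cphi dphi scphi _] _ [_ gradK]] fsc.
have [pf [lf _]] := fsc.
split => //; first exact: a_strongly_convex_convex fsc.
exact: a_strongly_convex_strict fsc.
Qed.
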